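(* Consider the CDM model with $\tilde{\lambda}_i>z_i>0$ for all $i\in\mathcal{M}$ and nonnegative $\bm{A}$ satisfying $$A_{ii}>\sum_{j\in\mathcal{M}\setminus\{i\}}A_{ij}\quad\text{for all } i\in\mathcal{M}.$$ Then $\bm{A}$ is nonsingular; every $\bm{x}^\ast>\bm{0}$ is the interior equilibrium of the CDM model for a (unique) associated parameter vector $\bm{q}>\bm{0}$; and for any $\bm{q}>\bm{0}$ for which the interior equilibrium $\bm{x}^\ast>\bm{0}$ exists, the corresponding equilibrium $\bm{y}^\ast$ of the age-structured CDM map is locally asymptotically stable, i.e. the Jacobian $\bm{J}^\ast$ of that map at $\bm{y}^\ast$ satisfies $\rho(\bm{J}^\ast)<1$. (The condition does not depend on the delays $\delta_i$.)
   Context: CDM model: $m\ge1$ species $\mathcal{M}=\{1,\dots,m\}$, delays $\delta_i\in\{0,1,\dots\}$, survival probabilities $\sigma_{a\mid i}\in(0,1]$ ($a<\delta_i$), adult survival $\sigma_{\delta_i\mid i}\in(0,1)$, $z_i=1-\sigma_{\delta_i\mid i}$, fecundity $\lambda_i>0$, $\tilde\lambda_i=\lambda_i\prod_{a=0}^{\delta_i-1}\sigma_{a\mid i}$ (empty product $=1$), $\bm{A}\ge\bm{0}$ ($m\times m$), $\bm{q}>\bm{0}$. Per capita growth $G_i(\bm{x})=\lambda_i/(1+q_i^{-1}\sum_{k}A_{ik}x_k)$. Age-structured map $h$ on $\bm{y}=(y_{a\mid i})$, $0\le a\le\delta_i$, with adults $\bm{x}=(y_{\delta_1\mid1},\dots,y_{\delta_m\mid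 m})^\top$: if $\delta_i>0$, $h_{0\mid i}(\bm{y})=G_i(\bm{x})y_{\delta_i\mid i}$, $h_{a\mid i}(\bm{y})=\sigma_{a-1\mid i}y_{a-1\mid i}$ ($1\le a\le\delta_i-1$), $h_{\delta_i\mid i}(\bm{y})=\sigma_{\delta_i-1\mid i}y_{\delta_i-1\mid i}+\sigma_{\delta_i\mid i}y_{\delta_i\mid i}$; if $\delta_i=0$, $h_{0\mid i}(\bm{y})=\sigma_{0\mid i}y_{0\mid i}+G_i(\bm{x})y_{0\mid i}$. Equivalently adults satisfy $x_i(t+1)=\sigma_{\delta_i\mid i}x_i(t)+\tilde\lambda_ix_i(t-\delta_i)/(1+q_i^{-1}\sum_kA_{ik}x_k(t-\delta_i))$. An interior equilibrium is $\bm{x}^\ast>\bm{0}$ satisfying $\bm{A}\bm{x}^\ast=\mathrm{diag}[\bm{\tilde\lambda}-\bm{z}]\mathrm{diag}[\bm{z}]^{-1}\bm{q}$; the full equilibrium $\bm{y}^\ast$ has $y^\ast_{\delta_i\mid i}=x_i^\ast$ and immature classes determined by $h(\bm{y}^\ast)=\bm{y}^\ast$. $\rho$ denotes spectral radius. *)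

From HB Require Import structures.
From mathcomp Require Import all_boot all_order all_algebra.
From mathcomp Require Import all_classical all_reals.
From mathcomp Require Import topology normedtype derive.
From mathcomp Require Import complex.
Set Implicit Arguments. Unset Strict Implicit. Unset Printing Implicit Defensive.
Import Order.TTheory GRing.Theory Num.Theory.
Import numFieldNormedType.Exports.
Local Open Scope ring_scope.

(* Parameters of the CDM model with m species:
   delta : 'I_m -> nat       the delays delta_i
   sigma : 'I_m -> nat -> R  sigma i a = sigma_{a|i} (only a <= delta i is used;
                             sigma i (delta i) is the adult survival)
   lam   : 'I_m -> R         the fecundities lambda_i
   A     : 'M[R]_m           interaction matrix
   q     : 'I_m -> R         the vector q                                   *)

Definition zz (R : pzRingType) (m : nat) (delta : 'I_m -> nat)
  (sigma : 'I_m -> nat -> R) (i : 'I_m) : R := 1 - sigma i (delta i).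

Definition lamt (R : pzRingType) (m : nat) (delta : 'I_m -> nat)
  (sigma : 'I_m -> nat -> R) (lam : 'I_m -> R) (i : 'I_m) : R :=
  lam i * \prod_(a < delta i) sigma i a.

Definition Gcdm (R : fieldType) (m : nat) (lam : 'I_m -> R) (A : 'M[R]_m)
  (q : 'I_m -> R) (x : 'I_m -> R) (i : 'I_m) : R :=
  lam i / (1 + (q i)^-1 * \sum_(k < m) A i k * x k).

Definition interior_equilibrium (R : numFieldType) (m : nat)
  (delta : 'I_m -> nat) (sigma : 'I_m -> nat -> R) (lam : 'I_m -> R)
  (A : 'M[R]_m) (q : 'I_m -> R) (xs : 'I_m -> R) : Prop :=
  (forall i, 0 < xs i) /\
  forall i, \sum_(k < m) A i k * xs k =
            (lamt delta sigma lam i - zz delta sigma i) / zz delta sigma i * q i.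

Definition ageT (m : nat) (delta : 'I_m -> nat) : finType :=
  {i : 'I_m & 'I_(delta i).+1}.

Definition dimY (m : nat) (delta : 'I_m -> nat) : nat := #|ageT delta|.

(* The state y is a row vector indexed (through enum_rank) by the age classes. *)
Definition ycomp (R : Type) (m : nat) (delta : 'I_m -> nat)
  (y : 'rV[R]_(dimY delta)) (i : 'I_m) (a : nat) : R :=
  y 0 (enum_rank (Tagged (fun j => 'I_(delta j).+1) (inord a : 'I_(delta i).+1))).

Definition adults (R : Type) (m : nat) (delta : 'I_m -> nat)
  (y : 'rV[R]_(dimY delta)) : 'I_m -> R :=
  fun i => ycomp y i (delta i).

Definition hcomp (R : fieldType) (m : nat) (delta : 'I_m -> nat)
  (sigma : 'I_m -> nat -> R) (lam : 'I_m -> R) (A : 'M[R]_m) (q : 'I_m -> R)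
  (y : 'rV[R]_(dimY delta)) (i : 'I_m) (a : nat) : R :=
  let x := adults y in
  if delta i == 0%N then
    sigma i 0%N * ycomp y i 0 + Gcdm lam A q x i * ycomp y i 0
  else if a == 0%N then Gcdm lam A q x i * ycomp y i (delta i)
  else if (a < delta i)%N then sigma i a.-1 * ycomp y i a.-1
  else sigma i (delta i).-1 * ycomp y i (delta i).-1
       + sigma i (delta i) * ycomp y i (delta i).

Definition hmap (R : fieldType) (m : nat) (delta : 'I_m -> nat)
  (sigma : 'I_m -> nat -> R) (lam : 'I_m -> R) (A : 'M[R]_m) (q : 'I_m -> R)
  (y : 'rV[R]_(dimY delta)) : 'rV[R]_(dimY delta) :=
  \row_k (let ia := enum_val k in
          hcomp sigma lam A q y (tag ia) (nat_of_ord (tagged ia))).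

Definition spectral_radius_lt1 (R : rcfType) (n : nat) (M : 'M[R]_n) : Prop :=
  forall z : R[i], root (char_poly (map_mx (real_complex R) M)) z -> `|z| < 1.

From HB Require Import structures.
From mathcomp Require Import all_boot all_order all_algebra.
From mathcomp Require Import all_classical all_reals.
From mathcomp Require Import topology normedtype derive.
From mathcomp Require Import complex.
From mathcomp Require Import ring.
Import Order.TTheory GRing.Theory Num.Theory.
Import numFieldNormedType.Exports.
Set Implicit Arguments. Unset Strict Implicit. Unset Printing Implicit Defensive.
Local Open Scope ring_scope.

(* Strict row dominance forces every nonnegative p with
   A_ii p_i <= sum_{j <> i} A_ij p_j to vanish; applied to |u| for A u = 0 it
   gives invertibility of A.  For the Jacobian at an interior equilibrium, let
   w be an eigenvector with eigenvalue z, |z| >= 1, and u_i its adult entries.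
   Running the eigen-equations through the juvenile classes of species i gives
     (z^d (z - s) - z_i) u_i = - omega_i (A u)_i,  d = delta_i, s = sigma_{d|i},
   with weights omega_i = x*_i z_i^2 / (lamt_i q_i) > 0 and omega_i A_ii <= z_i
   by the equilibrium equation.  As |z^d (z - s)| >= |z| - s >= z_i, the same
   dominance argument yields u = 0, and then all juvenile entries vanish too. *)

Section DiagonalDominance.
Variables (R : numDomainType) (n : nat) (A : 'M[R]_n).
Hypothesis A_ge0 : forall i j, 0 <= A i j.
Hypothesis A_dom : forall i, \sum_(j < n | j != i) A i j < A i i.

(* Evaluate the hypothesis at an index where [p] is maximal. *)
Lemma dominant_subsolution_eq0 (p : 'I_n -> R) :
  (forall i, 0 <= p i) ->
  (forall i, A i i * p i <= \sum_(j < n | j != i) A i j * p j) ->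
  forall i, p i = 0.
Proof.
move=> p_ge0 p_sub i0.
case: (@real_arg_maxP _ _ i0 xpredT p isT) => [i _|k _ p_max].
  exact: ger0_real.
suff pk0 : p k = 0 by apply/eqP; rewrite eq_le p_ge0 andbT -pk0; exact: p_max.
have := p_ge0 k; rewrite le_eqVlt => /predU1P [<-//|pk_gt0].
have : A k k * p k <= (\sum_(j < n | j != k) A k j) * p k.
  rewrite mulr_suml; apply: le_trans (p_sub k) _.
  by apply: ler_sum => j _; apply: ler_wpM2l; [exact: A_ge0 | exact: p_max].
by rewrite ler_pM2r // => /(lt_le_trans (A_dom k)); rewrite ltxx.
Qed.

Lemma dominant_kernel_eq0 (u : 'I_n -> R) :
  (forall i, \sum_(j < n) A i j * u j = 0) -> forall i, u i = 0.
Proof.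
move=> Au0 i; apply/normr0_eq0; move: i.
apply: dominant_subsolution_eq0 => [i|i]; first exact: normr_ge0.
have /eqP := Au0 i; rewrite (bigD1 i) //= addr_eq0 => /eqP Aii_ui.
rewrite -(ger0_norm (A_ge0 i i)) -normrM Aii_ui normrN.
apply: le_trans (ler_norm_sum _ _ _) _; apply: ler_sum => j _.
by rewrite normrM ger0_norm.
Qed.

Lemma diag_le_row_sum (x : 'I_n -> R) i : (forall j, 0 <= x j) ->
  A i i * x i <= \sum_(k < n) A i k * x k.
Proof.
move=> x_ge0; rewrite (bigD1 i) //= lerDl.
by apply: sumr_ge0 => k _; apply: mulr_ge0.
Qed.

Lemma dominant_row_sum_gt0 (x : 'I_n -> R) i : (forall j, 0 < x j) ->
  0 < \sum_(k < n) A i k * x k.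
Proof.
move=> x_gt0; apply: lt_le_trans (diag_le_row_sum i (fun j => ltW (x_gt0 j))).
rewrite pmulr_lgt0 //; apply: le_lt_trans (A_dom i).
by apply: sumr_ge0 => j _.
Qed.

End DiagonalDominance.

Lemma dominant_unitmx (R : numFieldType) n (A : 'M[R]_n) :
  (forall i j, 0 <= A i j) -> (forall i, \sum_(j < n | j != i) A i j < A i i) ->
  A \in unitmx.
Proof.
move=> A_ge0 A_dom; rewrite unitmxE unitfE -det_tr.
apply/negP => /det0P [v /eqP v_neq0 vAT0]; apply: v_neq0; apply/rowP => j.
rewrite mxE; apply: (dominant_kernel_eq0 A_ge0 A_dom) => i.
have /rowP/(_ i) := vAT0; rewrite !mxE => vATi0; rewrite -[RHS]vATi0.
by apply: eq_bigr => k _; rewrite !mxE mulrC.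
Qed.

Lemma interior_equilibrium_param_unique (R : numFieldType) m (delta : 'I_m -> nat)
  (sigma : 'I_m -> nat -> R) (lam : 'I_m -> R) (A : 'M[R]_m) :
  (forall i, 0 < zz delta sigma i < lamt delta sigma lam i) ->
  (forall i j, 0 <= A i j) -> (forall i, \sum_(j < m | j != i) A i j < A i i) ->
  forall xs : 'I_m -> R, (forall i, 0 < xs i) ->
  exists! q : 'I_m -> R, (forall i, 0 < q i) /\
    interior_equilibrium delta sigma lam A q xs.
Proof.
move=> z_lt_lamt A_ge0 A_dom xs xs_gt0.
pose c i := (lamt delta sigma lam i - zz delta sigma i) / zz delta sigma i.
have c_gt0 i : 0 < c i.
  by have /andP[z_gt0 z_lt] := z_lt_lamt i; rewrite divr_gt0 // subr_gt0.
exists (fun i => (\sum_(k < m) A i k * xs k) / c i); split.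
  split=> [i|]; first by rewrite divr_gt0 // (dominant_row_sum_gt0 A_ge0 A_dom).
  by split=> // i; rewrite -/(c i) mulrC divfK // gt_eqF.
move=> q [_ [_ q_eq]]; apply: funext => i.
by rewrite q_eq -/(c i) mulrC mulKf // gt_eqF.
Qed.

Section DirectionalDerivatives.
Variables (R : realType) (n : nat).
Local Notation V := 'rV[R]_n.

Definition differentiable_with (f : V -> R) (p : V) (Df : V -> R) :=
  differentiable f p /\ forall v, 'D_v f p = Df v.

Lemma differentiable_with_eq f g p Df Dg :
  differentiable_with f p Df -> f = g -> (forall v, Df v = Dg v) ->
  differentiable_with g p Dg.
Proof. by move=> [df Df_eq] <- DfDg; split => // v; rewrite Df_eq DfDg. Qed.

Lemma differentiable_with_cst (c : R) p : differentiable_with (fun=> c) p (fun=> 0).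
Proof.
split; first exact: differentiable_cst.
by move=> v; rewrite (_ : (fun=> c) = cst c) // derive_cst.
Qed.

Lemma differentiable_with_coord j p :
  differentiable_with (fun y : V => y 0 j) p (fun v => v 0 j).
Proof.
have @coord : {linear V -> R}.
  by exists (fun y : V => y 0 j); do 2![eexists]; do ?[constructor];
     rewrite ?mxE// => ? *; rewrite ?mxE//; move=> ?; rewrite !mxE.
have coord_cont : continuous coord by exact: coord_continuous.
rewrite (_ : (fun _ => _) = coord) //; split; first exact: linear_differentiable.
by move=> v; rewrite deriveE ?diff_lin //; exact: linear_differentiable.
Qed.

Lemma differentiable_withD f g p Df Dg :
  differentiable_with f p Df -> differentiable_with g p Dg ->
  differentiable_with (fun y => f y + g y) p (fun v => Df v + Dg v).
Proof.
move=> [df Df_eq] [dg Dg_eq]; split; first exact: (differentiableD df dg).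
move=> v; rewrite (_ : (fun y => f y + g y) = f + g) //.
by rewrite deriveD ?Df_eq ?Dg_eq //; exact: diff_derivable.
Qed.

Lemma differentiable_withM f g p Df Dg :
  differentiable_with f p Df -> differentiable_with g p Dg ->
  differentiable_with (fun y => f y * g y) p (fun v => f p * Dg v + g p * Df v).
Proof.
move=> [df Df_eq] [dg Dg_eq]; split; first exact: (differentiableM df dg).
move=> v; rewrite (_ : (fun y => f y * g y) = f * g) //.
by rewrite deriveM ?Df_eq ?Dg_eq //; exact: diff_derivable.
Qed.

Lemma differentiable_withV f p Df : differentiable_with f p Df -> f p != 0 ->
  differentiable_with (fun y => (f y)^-1) p (fun v => - (f p) ^- 2 * Df v).
Proof.
move=> [df Df_eq] fp_neq0; split; first exact: differentiableV.
by move=> v; rewrite deriveV ?Df_eq //; exact: diff_derivable.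
Qed.

Lemma differentiable_with_sum m (f : 'I_m -> V -> R) p Df :
  (forall k, differentiable_with (f k) p (Df k)) ->
  differentiable_with (fun y => \sum_(k < m) f k y) p (fun v => \sum_(k < m) Df k v).
Proof.
elim: m f Df => [|m IH] f Df dfk.
  under eq_fun do rewrite big_ord0.
  by under [X in differentiable_with _ _ X]eq_fun do rewrite big_ord0;
     exact: differentiable_with_cst.
under eq_fun do rewrite big_ord_recr.
under [X in differentiable_with _ _ X]eq_fun do rewrite big_ord_recr.
by apply: differentiable_withD; [exact: IH | exact: dfk].
Qed.

Lemma differentiable_with_row N (f : 'I_N -> V -> R) p Df :
  (forall k, differentiable_with (f k) p (Df k)) ->
  differentiable (fun y => \row_k f k y) p /\
  forall v, 'D_v (fun y => \row_k f k y) p = \row_k Df k v.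
Proof.
move=> dfk.
have -> : (fun y => \row_k f k y) = \sum_(k < N) (fun y => f k y *: ('e_k : 'rV[R]_N)).
  apply: funext => y; rewrite fct_sumE [LHS]row_sum_delta.
  by apply: eq_bigr => k _; rewrite mxE.
have dek k : differentiable (fun y => f k y *: ('e_k : 'rV[R]_N)) p.
  exact/differentiableZl/(dfk k).1.
split; first exact: differentiable_sum.
move=> v; rewrite derive_sum; last by move=> k; exact: diff_derivable.
rewrite [RHS]row_sum_delta; apply: eq_bigr => k _.
have [dk Dk] := dfk k.
by rewrite deriveE // diffZl //= -deriveE // Dk mxE.
Qed.

End DirectionalDerivatives.

(* Linearisation of [hcomp]: [g i] stands for G_i(x) and [dg i * B i k] for
   y_{delta_i|i} dG_i/dx_k; [W i a] is the (a|i) component of the argument. *)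
Definition lin_age_comp (K : fieldType) m (delta : 'I_m -> nat)
  (sg : 'I_m -> nat -> K) (g dg : 'I_m -> K) (B : 'M[K]_m)
  (W : 'I_m -> nat -> K) (i : 'I_m) (a : nat) : K :=
  let S := \sum_(j < m) B i j * W j (delta j) in
  if delta i == 0%N then sg i 0%N * W i 0%N + (g i * W i 0%N + dg i * S)
  else if a == 0%N then g i * W i (delta i) + dg i * S
  else if (a < delta i)%N then sg i a.-1 * W i a.-1
  else sg i (delta i).-1 * W i (delta i).-1 + sg i (delta i) * W i (delta i).

Definition lin_age_map (K : fieldType) m (delta : 'I_m -> nat)
  (sg : 'I_m -> nat -> K) (g dg : 'I_m -> K) (B : 'M[K]_m)
  (v : 'rV[K]_(dimY delta)) : 'rV[K]_(dimY delta) :=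
  \row_k (let ia := enum_val k in
          lin_age_comp delta sg g dg B (ycomp v) (tag ia)
            (nat_of_ord (tagged ia))).

Lemma lin_age_mapDZ (K : fieldType) m (delta : 'I_m -> nat)
  (sg : 'I_m -> nat -> K) (g dg : 'I_m -> K) (B : 'M[K]_m) (c : K)
  (u w : 'rV[K]_(dimY delta)) :
  lin_age_map sg g dg B (c *: u + w) =
  c *: lin_age_map sg g dg B u + lin_age_map sg g dg B w.
Proof.
apply/rowP => k; rewrite !mxE /lin_age_comp.
have ycompDZ i a : ycomp (c *: u + w) i a = c * ycomp u i a + ycomp w i a.
  by rewrite /ycomp !mxE.
have sumDZ i : \sum_(j < m) B i j * ycomp (c *: u + w) j (delta j) =
    c * \sum_(j < m) B i j * ycomp u j (delta j)
    + \sum_(j < m) B i j * ycomp w j (delta j).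
  by rewrite mulr_sumr -big_split; apply: eq_bigr => j _; rewrite ycompDZ /=; ring.
rewrite sumDZ !ycompDZ.
case: (delta _ == 0%N); first by ring.
case: (_ == 0%N); first by ring.
by case: (_ < _)%N; ring.
Qed.

Lemma map_lin_age_map (K L : fieldType) (f : {rmorphism K -> L}) m
  (delta : 'I_m -> nat) (sg : 'I_m -> nat -> K) (g dg : 'I_m -> K)
  (B : 'M[K]_m) (v : 'rV[K]_(dimY delta)) :
  map_mx f (lin_age_map sg g dg B v) =
  lin_age_map (fun i a => f (sg i a)) (f \o g) (f \o dg) (map_mx f B)
    (map_mx f v).
Proof.
apply/rowP => k; rewrite !mxE /lin_age_comp.
have ycomp_map i a : ycomp (map_mx f v) i a = f (ycomp v i a).
  by rewrite /ycomp !mxE.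
have sum_map i : \sum_(j < m) map_mx f B i j * ycomp (map_mx f v) j (delta j) =
    f (\sum_(j < m) B i j * ycomp v j (delta j)).
  by rewrite rmorph_sum; apply: eq_bigr => j _; rewrite ycomp_map mxE rmorphM.
rewrite sum_map !ycomp_map /=.
case: (delta _ == 0%N); first by rewrite !rmorphD !rmorphM.
case: (_ == 0%N); first by rewrite !rmorphD !rmorphM.
by case: (_ < _)%N; rewrite ?rmorphD !rmorphM.
Qed.

Section HmapJacobian.
Variables (R : realType) (m : nat) (delta : 'I_m -> nat)
  (sigma : 'I_m -> nat -> R) (lam : 'I_m -> R) (A : 'M[R]_m) (q : 'I_m -> R)
  (ys : 'rV[R]_(dimY delta)).

Definition growth_denom i := 1 + (q i)^-1 * \sum_(k < m) A i k * adults ys k.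
Definition growth i := Gcdm lam A q (adults ys) i.
Definition growth_slope i :=
  adults ys i * (- lam i * (growth_denom i)^-2 * (q i)^-1).

Lemma differentiable_with_ycomp i a :
  differentiable_with (fun y => ycomp y i a) ys (fun v => ycomp v i a).
Proof. exact: differentiable_with_coord. Qed.

Lemma differentiable_with_adult_sum i :
  differentiable_with (fun y => \sum_(k < m) A i k * adults y k) ys
    (fun v => \sum_(k < m) A i k * adults v k).
Proof.
apply: differentiable_with_eq (differentiable_with_sum (fun k =>
  differentiable_withM (differentiable_with_cst (A i k) ys)
    (differentiable_with_ycomp k (delta k)))) _ _ => // v.
by apply: eq_bigr => k _; rewrite mulr0 addr0.
Qed.

Lemma differentiable_with_growth i : growth_denom i != 0 ->
  differentiable_with (fun y => Gcdm lam A q (adults y) i) ys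
    (fun v => - lam i * (growth_denom i)^-2 * (q i)^-1 *
              \sum_(k < m) A i k * adults v k).
Proof.
move=> denom_neq0.
have ddenom := differentiable_withD (differentiable_with_cst 1 ys)
  (differentiable_withM (differentiable_with_cst (q i)^-1 ys)
     (differentiable_with_adult_sum i)).
apply: differentiable_with_eq (differentiable_withM
  (differentiable_with_cst (lam i) ys) (differentiable_withV ddenom denom_neq0))
  _ _ => // v /=.
by rewrite mulr0 !add0r addr0 /growth_denom; ring.
Qed.

Lemma jacobian_hmap : (forall i, growth_denom i != 0) ->
  forall v, v *m 'J (hmap sigma lam A q) ys =
            lin_age_map sigma growth growth_slope A v.
Proof.
move=> denom_neq0.
pose f (k : 'I_(dimY delta)) (y : 'rV[R]_(dimY delta)) :=
  let ia := enum_val k in hcomp sigma lam A q y (tag ia) (nat_of_ord (tagged ia)).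
have df k : differentiable_with (f k) ys (fun v => let ia := enum_val k in
    lin_age_comp delta sigma growth growth_slope A (ycomp v) (tag ia)
      (nat_of_ord (tagged ia))).
  rewrite /f /hcomp /lin_age_comp /=; case: (enum_val k) => i a /=.
  have dG := differentiable_with_growth (denom_neq0 i).
  have dsy b := differentiable_withM (differentiable_with_cst (sigma i b) ys)
    (differentiable_with_ycomp i b).
  case: eqP => [d0|d_neq0].
    apply: differentiable_with_eq (differentiable_withD (dsy 0%N)
      (differentiable_withM dG (differentiable_with_ycomp i 0))) _ _ => // v /=.
    by rewrite /growth_slope /growth /adults d0; ring.
  case: eqP => [a0|a_neq0].
    apply: differentiable_with_eq (differentiable_withM dG
      (differentiable_with_ycomp i (delta i))) _ _ => // v /=.
    by rewrite /growth_slope /growth /adults; ring.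
  case: ltnP => _.
    by apply: differentiable_with_eq (dsy a.-1) _ _ => // v /=; ring.
  apply: differentiable_with_eq
    (differentiable_withD (dsy (delta i).-1) (dsy (delta i))) _ _ => // v /=.
  ring.
have [dh Dh] := differentiable_with_row df.
by move=> v; rewrite -deriveEjacobian.
Qed.

End HmapJacobian.

Lemma le_norm_char_factor (C : numFieldType) (z s : C) d :
  0 <= s -> 1 <= `|z| -> 1 - s <= `|z ^+ d * (z - s)|.
Proof.
move=> s_ge0 z_ge1; rewrite normrM normrX.
apply: (@le_trans _ _ `|z - s|).
  by apply: le_trans (lerB_dist z s); rewrite (ger0_norm s_ge0) lerD2r.
by apply: ler_peMl => //; exact: exprn_ege1.
Qed.

Section AgeEigenvector.
Variables (C : numFieldType) (m : nat) (delta : 'I_m -> nat).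
Variables (sg : 'I_m -> nat -> C) (g dg wt : 'I_m -> C) (B : 'M[C]_m).
Variables (v : 'rV[C]_(dimY delta)) (z : C).
Hypothesis B_ge0 : forall i j, 0 <= B i j.
Hypothesis B_dom : forall i, \sum_(j < m | j != i) B i j < B i i.
Hypothesis sg_adult_ge0 : forall i, 0 <= sg i (delta i).
Hypothesis recruit_growth :
  forall i, (\prod_(a < delta i) sg i a) * g i = 1 - sg i (delta i).
Hypothesis recruit_slope : forall i, (\prod_(a < delta i) sg i a) * dg i = - wt i.
Hypothesis wt_gt0 : forall i, 0 < wt i.
Hypothesis wt_diag_le : forall i, wt i * B i i <= 1 - sg i (delta i).
Hypothesis eigen_v : lin_age_map sg g dg B v = z *: v.
Hypothesis z_ge1 : 1 <= `|z|.

Local Notation W := (ycomp v).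
Local Notation adult_sum i := (\sum_(j < m) B i j * W j (delta j)).

Lemma ycomp_eigen i a : (a <= delta i)%N ->
  z * W i a = lin_age_comp delta sg g dg B W i a.
Proof.
move=> a_le.
pose k := enum_rank (Tagged (fun j => 'I_(delta j).+1) (inord a : 'I_(delta i).+1)).
by move/rowP: eigen_v => /(_ k); rewrite !mxE /k enum_rankK /= inordK ?ltnS.
Qed.

Lemma juvenile_eigen i a : (0 < delta i)%N -> (a < delta i)%N ->
  z ^+ a * W i a = (\prod_(b < a) sg i b) * W i 0%N.
Proof.
move=> d_gt0; elim: a => [|a IH] a_lt; first by rewrite expr0 mul1r big_ord0 mul1r.
rewrite exprSr -mulrA ycomp_eigen ?(ltnW a_lt) // /lin_age_comp.
rewrite -[delta i == 0%N]negbK -lt0n d_gt0 a_lt /= mulrCA IH ?(ltnW a_lt) //.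
by rewrite big_ord_recr /= mulrA [_ * sg i a]mulrC.
Qed.

Lemma adult_eigen i :
  (z ^+ delta i * (z - sg i (delta i)) - (1 - sg i (delta i))) * W i (delta i) =
  - wt i * adult_sum i.
Proof.
have := recruit_slope i; have := recruit_growth i.
have newborn := ycomp_eigen (leq0n (delta i)).
have adult := ycomp_eigen (leqnn (delta i)).
have juvenile := @juvenile_eigen i (delta i).-1.
rewrite /lin_age_comp in newborn adult.
move: newborn adult juvenile; case: (delta i) => [|d].
  move=> newborn _ _; rewrite eqxx in newborn.
  rewrite big_ord0 !mul1r => <- <-.
  apply/eqP; rewrite -subr_eq0; apply/eqP.
  transitivity (z * W i 0%N
    - (sg i 0%N * W i 0%N + (g i * W i 0%N + dg i * adult_sum i))); first by ring.
  by rewrite newborn subrr.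
rewrite ltnn /= => newborn adult /(_ isT (ltnSn _)) juvenile.
rewrite big_ord_recr /=; set P := \prod_(b < d) sg i b => <- <-.
apply/eqP; rewrite -subr_eq0; apply/eqP.
transitivity (z ^+ d * z * (z * W i d.+1 - (sg i d * W i d + sg i d.+1 * W i d.+1))
  + z * sg i d * (z ^+ d * W i d - P * W i 0%N)
  + P * sg i d * (z * W i 0%N - (g i * W i d.+1 + dg i * adult_sum i))).
  by rewrite exprSr; ring.
by rewrite adult juvenile newborn !subrr !mulr0 !addr0.
Qed.

(* Since |z^d (z - s)| >= 1 - s >= wt_i B_ii, the adult equations make the
   moduli |W i (delta i)| a subsolution for B. *)
Lemma adult_eigen_eq0 i : W i (delta i) = 0.
Proof.
apply/normr0_eq0; move: i.
apply: (dominant_subsolution_eq0 B_ge0 B_dom) => i; first exact: normr_ge0.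
have eq_i := adult_eigen i; rewrite (bigD1 i) //= in eq_i.
set X := z ^+ delta i * (z - sg i (delta i)) in eq_i.
set T := \sum_(j < m | j != i) B i j * W j (delta j) in eq_i.
set Y := 1 - sg i (delta i) - wt i * B i i.
have eq_off : (X - Y) * W i (delta i) = - (wt i * T).
  transitivity ((X - (1 - sg i (delta i))) * W i (delta i)
                + wt i * B i i * W i (delta i)); first by rewrite /Y; ring.
  by rewrite eq_i; ring.
have Y_ge0 : 0 <= Y by rewrite subr_ge0.
have diag_le : wt i * B i i <= `|X - Y|.
  apply: le_trans (lerB_dist _ _); rewrite (ger0_norm Y_ge0).
  rewrite (_ : `|X| - Y = wt i * B i i + (`|X| - (1 - sg i (delta i)))); last first.
    by rewrite /Y; ring.
  by rewrite lerDl subr_ge0 le_norm_char_factor.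
rewrite -(ler_pM2l (wt_gt0 i)) mulrA.
apply: le_trans (ler_wpM2r (normr_ge0 _) diag_le) _.
rewrite -normrM eq_off normrN normrM (gtr0_norm (wt_gt0 i)) ler_pM2l //.
apply: le_trans (ler_norm_sum _ _ _) _; apply: ler_sum => j _.
by rewrite normrM (ger0_norm (B_ge0 _ _)).
Qed.

Lemma eigen_eq0 : v = 0.
Proof.
have z_neq0 : z != 0 by apply: contraTneq z_ge1 => ->; rewrite normr0 ler10.
have ycomp_eq0 i a : (a <= delta i)%N -> W i a = 0.
  have [d0|d_gt0] := posnP (delta i).
    by rewrite d0 leqn0 => /eqP ->; have := adult_eigen_eq0 i; rewrite d0.
  have newborn0 : W i 0%N = 0.
    have := ycomp_eigen (leq0n (delta i)); rewrite /lin_age_comp.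
    rewrite -[delta i == 0%N]negbK -lt0n d_gt0 eqxx /= adult_eigen_eq0.
    rewrite big1 => [|j _]; last by rewrite adult_eigen_eq0 mulr0.
    by rewrite !mulr0 addr0 => /eqP; rewrite mulf_eq0 (negbTE z_neq0) => /eqP.
  rewrite leq_eqVlt => /predU1P [->|a_lt]; first exact: adult_eigen_eq0.
  have /eqP := juvenile_eigen d_gt0 a_lt; rewrite newborn0 mulr0.
  by rewrite mulf_eq0 expf_eq0 (negbTE z_neq0) andbF => /eqP.
apply/rowP => k; rewrite mxE -(enum_valK k); case: (enum_val k) => i a.
by have := ycomp_eq0 i a (ltn_ord a); rewrite /ycomp inord_val.
Qed.

End AgeEigenvector.

Lemma mulmx_map_complex (R : rcfType) N (J : 'M[R]_N)
  (L : 'rV[R[i]]_N -> 'rV[R[i]]_N) :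
  (forall v, map_mx (real_complex R) (v *m J) = L (map_mx (real_complex R) v)) ->
  (forall c u w, L (c *: u + w) = c *: L u + L w) ->
  forall w, w *m map_mx (real_complex R) J = L w.
Proof.
move=> JL L_lin w.
have w_ReIm : w = 'i%C *: map_mx (real_complex R) (map_mx (@complex.Im R) w)
                  + map_mx (real_complex R) (map_mx (@complex.Re R) w).
  by apply/rowP => k; rewrite !mxE {1}[w 0 k]complexE addrC.
by rewrite {1}w_ReIm mulmxDl -scalemxAl -!map_mxM !JL -L_lin -w_ReIm.
Qed.

Section EquilibriumLinearisation.
Variables (R : realType) (m : nat) (delta : 'I_m -> nat)
  (sigma : 'I_m -> nat -> R) (lam : 'I_m -> R) (A : 'M[R]_m) (q : 'I_m -> R)
  (xs : 'I_m -> R) (ys : 'rV[R]_(dimY delta)).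
Hypothesis z_lt_lamt : forall i, 0 < zz delta sigma i < lamt delta sigma lam i.
Hypothesis A_ge0 : forall i j, 0 <= A i j.
Hypothesis q_gt0 : forall i, 0 < q i.
Hypothesis xs_equilibrium : interior_equilibrium delta sigma lam A q xs.
Hypothesis adults_ys : adults ys = xs.

Local Notation zi := (zz delta sigma).
Local Notation lti := (lamt delta sigma lam).

Definition equilibrium_weight i := xs i * zi i ^+ 2 / (lti i * q i).

Let zi_gt0 i : 0 < zi i. Proof. by case/andP: (z_lt_lamt i). Qed.
Let lti_gt0 i : 0 < lti i. Proof. by case/andP: (z_lt_lamt i) => /lt_trans; apply. Qed.
Let xs_gt0 i : 0 < xs i. Proof. by case: xs_equilibrium. Qed.
Let lti_factors_neq0 i : (lam i != 0) && (\prod_(a < delta i) sigma i a != 0).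
Proof. by rewrite -negb_or -mulf_eq0 (gt_eqF (lti_gt0 i)). Qed.

Lemma growth_denom_eq i : growth_denom A q ys i = lti i / zi i.
Proof.
case: xs_equilibrium => _ xs_eq.
rewrite /growth_denom adults_ys xs_eq; field.
by rewrite !gt_eqF.
Qed.

Lemma recruit_growth_eq i :
  (\prod_(a < delta i) sigma i a) * growth lam A q ys i = zi i.
Proof.
rewrite /growth /Gcdm -/(growth_denom A q ys i) growth_denom_eq.
have /andP[lam_neq0 P_neq0] := lti_factors_neq0 i.
rewrite /lamt; field.
by rewrite lam_neq0 P_neq0 gt_eqF.
Qed.

Lemma recruit_slope_eq i :
  (\prod_(a < delta i) sigma i a) * growth_slope lam A q ys i =
  - equilibrium_weight i.
Proof.
rewrite /growth_slope /equilibrium_weight growth_denom_eq adults_ys.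
have /andP[lam_neq0 P_neq0] := lti_factors_neq0 i.
rewrite /lamt; field.
by rewrite lam_neq0 P_neq0 !gt_eqF.
Qed.

Lemma equilibrium_weight_gt0 i : 0 < equilibrium_weight i.
Proof.
by apply: divr_gt0; apply: mulr_gt0; rewrite ?exprn_gt0 ?xs_gt0 ?zi_gt0 ?lti_gt0.
Qed.

(* [A_ii xs_i <= (A xs)_i = (lamt_i - z_i) q_i / z_i <= lamt_i q_i / z_i]. *)
Lemma equilibrium_weight_diag_le i : equilibrium_weight i * A i i <= zi i.
Proof.
case: xs_equilibrium => _ xs_eq.
have diag_le := diag_le_row_sum A_ge0 i (fun j => ltW (xs_gt0 j)).
rewrite xs_eq in diag_le.
have Axz_le : A i i * xs i * zi i <= lti i * q i.
  apply: le_trans (ler_wpM2r (ltW (zi_gt0 i)) diag_le) _.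
  rewrite (_ : _ * zi i = (lti i - zi i) * q i); last by field; rewrite gt_eqF.
  apply: ler_wpM2r; first exact: ltW.
  by rewrite lerBlDr lerDl ltW.
have -> : equilibrium_weight i * A i i =
    zi i * (A i i * xs i * zi i / (lti i * q i)).
  by rewrite /equilibrium_weight; field; rewrite !gt_eqF.
by rewrite ger_pMr // ler_pdivrMr ?mul1r // mulr_gt0.
Qed.

End EquilibriumLinearisation.

Lemma jacobian_hmap_spectral_radius_lt1 (R : realType) m (delta : 'I_m -> nat)
  (sigma : 'I_m -> nat -> R) (lam : 'I_m -> R) (A : 'M[R]_m)
  (q xs : 'I_m -> R) (ys : 'rV[R]_(dimY delta)) :
  (forall i, 0 <= sigma i (delta i)) ->
  (forall i, 0 < zz delta sigma i < lamt delta sigma lam i) ->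
  (forall i j, 0 <= A i j) -> (forall i, \sum_(j < m | j != i) A i j < A i i) ->
  (forall i, 0 < q i) -> interior_equilibrium delta sigma lam A q xs ->
  adults ys = xs ->
  spectral_radius_lt1 ('J (hmap sigma lam A q) ys).
Proof.
move=> sigma_ge0 z_lt_lamt A_ge0 A_dom q_gt0 xs_eq adults_ys.
pose f := real_complex R.
have denom_neq0 i : growth_denom A q ys i != 0.
  have /andP[z_gt0 z_lt] := z_lt_lamt i.
  by rewrite (growth_denom_eq z_lt_lamt q_gt0 xs_eq adults_ys) gt_eqF // divr_gt0
    // (lt_trans z_gt0).
have jacobianC w : w *m map_mx f ('J (hmap sigma lam A q) ys) =
    lin_age_map (fun i a => f (sigma i a)) (f \o growth lam A q ys)
      (f \o growth_slope lam A q ys) (map_mx f A) w.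
  apply: mulmx_map_complex => [v|c u v]; last exact: lin_age_mapDZ.
  by rewrite jacobian_hmap // map_lin_age_map.
move=> z; rewrite -eigenvalue_root_char => /eigenvalueP [w w_eigen w_neq0].
rewrite real_ltNge ?realE ?normr_ge0 ?ler01 //; apply: contra w_neq0 => z_ge1.
rewrite jacobianC in w_eigen; apply/eqP; apply: (eigen_eq0 _ _ _ _ _ _ _ w_eigen z_ge1).
- by move=> i j; rewrite mxE ler0c.
- move=> i; rewrite mxE (eq_bigr (fun j => f (A i j))) => [|j _]; last by rewrite mxE.
  by rewrite -rmorph_sum ltcR.
- by move=> i; rewrite ler0c.
- move=> i; rewrite -rmorph_prod -rmorphM.
  by rewrite (recruit_growth_eq z_lt_lamt q_gt0 xs_eq adults_ys) rmorphB rmorph1.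
- move=> i; rewrite -rmorph_prod -rmorphM.
  by rewrite (recruit_slope_eq z_lt_lamt q_gt0 xs_eq adults_ys) rmorphN.
- move=> i; rewrite /= ltcR.
  exact: (equilibrium_weight_gt0 z_lt_lamt q_gt0 xs_eq).
- move=> i; rewrite mxE -rmorphM -(rmorph1 f) -rmorphB lecR.
  exact: (equilibrium_weight_diag_le z_lt_lamt A_ge0 q_gt0 xs_eq).
Qed.

(* Only the adult components of [ys] enter the Jacobian. *)
Unset Implicit Arguments.

Theorem proposition1 (R : realType) (m : nat) (delta : 'I_m -> nat)
  (sigma : 'I_m -> nat -> R) (lam : 'I_m -> R) (A : 'M[R]_m) :
  (0 < m)%N ->
  (forall i (a : nat), (a < delta i)%N -> 0 < sigma i a <= 1) ->
  (forall i, 0 < sigma i (delta i) < 1) ->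
  (forall i, 0 < lam i) ->
  (forall i, 0 < zz delta sigma i < lamt delta sigma lam i) ->
  (forall i j, 0 <= A i j) ->
  (forall i, A i i > \sum_(j < m | j != i) A i j) ->
  [/\ A \in unitmx,
      (forall xs : 'I_m -> R, (forall i, 0 < xs i) ->
         exists! q : 'I_m -> R, (forall i, 0 < q i) /\
           interior_equilibrium delta sigma lam A q xs)
    & (forall (q xs : 'I_m -> R) (ys : 'rV[R]_(dimY delta)),
         (forall i, 0 < q i) ->
         interior_equilibrium delta sigma lam A q xs ->
         hmap sigma lam A q ys = ys ->
         adults ys = xs ->
         spectral_radius_lt1 ('J (hmap sigma lam A q) ys))].
Proof.
move=> _ _ sigma_adult _ z_lt_lamt A_ge0 A_dom; split.
- exact: dominant_unitmx.
- exact: interior_equilibrium_param_unique.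
- move=> q xs ys q_gt0 xs_eq _ adults_ys.
  apply: (jacobian_hmap_spectral_radius_lt1 _ z_lt_lamt A_ge0 A_dom q_gt0 xs_eq
    adults_ys) => i.
  by case/andP: (sigma_adult i) => /ltW.
Qed.
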